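(* Let $n\geq4$ with $n\not\equiv 0 \pmod 3$, let $R=K[x_1,\ldots,x_n]$ with $\mathfrak m=(x_1,\ldots,x_n)$, and let $I_n=NI(C_n)=(x_{i-1}x_ix_{i+1}: i=1,\ldots,n)$ (indices modulo $n$) be the closed neighborhood ideal of the $n$-cycle. Then $\mathrm{depth}(R/I_n^{\,n-1})=0$. In particular, $\mathfrak m\in\mathrm{Ass}(R/I_n^{\,n-1})$ and $\lim_{k\to\infty}\mathrm{depth}(R/I_n^k)=0$.
   Context: $C_n$ is the cycle with vertices $1,\ldots,n$ and edges $\{i,i+1\}$ ($1\le i\le n-1$) and $\{n,1\}$. For a simple graph $G$, $N_G[i]=\{j:\{i,j\}\in E(G)\}\cup\{i\}$ and $NI(G)=(\prod_{j\in N_G[i]}x_j : i\in V(G))$. *)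

From HB Require Import structures.
From mathcomp Require Import all_boot all_order all_algebra.
From mathcomp Require Import mpoly.
Set Implicit Arguments. Unset Strict Implicit. Unset Printing Implicit Defensive.
Import GRing.Theory.
Local Open Scope ring_scope.

Section Defs.
Variables (K : fieldType) (n : nat).
Notation R := {mpoly K[n]}.

Definition in_ideal (gens : seq R) (p : R) : Prop :=
  exists c : 'I_(size gens) -> R, p = \sum_(i < size gens) c i * nth 0 gens i.

Definition ideal_pow (gens : seq R) (k : nat) : seq R :=
  [seq \prod_(j < k) nth 0 gens (f j) | f : {ffun 'I_k -> 'I_(size gens)}].

Definition max_ideal : seq R := [seq 'X_i | i <- enum 'I_n].

Definition cycle_adj (i j : 'I_n) : bool :=
  ((val j == (val i).+1 %% n) || (val i == (val j).+1 %% n))%N.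

Definition NI (adj : rel 'I_n) : seq R :=
  [seq \prod_(j : 'I_n | adj i j || (j == i)) 'X_j | i <- enum 'I_n].

Definition NI_cycle : seq R := NI cycle_adj.

Definition regular_seq (J : seq R) (s : seq R) : Prop :=
  (forall i, (i < size s)%N -> in_ideal max_ideal (nth 0 s i)) /\
  (forall i, (i < size s)%N -> forall g : R,
      in_ideal (J ++ take i s) (nth 0 s i * g) -> in_ideal (J ++ take i s) g) /\
  ~ in_ideal (J ++ s) 1.

Definition has_depth (J : seq R) (d : nat) : Prop :=
  (exists s, regular_seq J s /\ size s = d) /\
  (forall s, regular_seq J s -> (size s <= d)%N).

Definition max_in_Ass (J : seq R) : Prop :=
  exists f : R, forall g : R, in_ideal J (g * f) <-> in_ideal max_ideal g.

End Defs.

From HB Require Import structures.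
From mathcomp Require Import all_boot all_order all_algebra.
From mathcomp Require Import mpoly.
From mathcomp Require Import zify.
Set Implicit Arguments. Unset Strict Implicit. Unset Printing Implicit Defensive.
Import GRing.Theory.

(* The proof exhibits a socle monomial.  First, for any ideal J generated by
   monomials of degree >= D we show: if f is a monomial of degree < D with
   x_i f in J for every variable x_i, then ann(f + J) = m, i.e. m is an
   associated prime of R/J; and m in Ass(R/J) forces depth(R/J) = 0, since
   every element of m kills the nonzero class of f.

   I_n^k is generated by products of k generators x_(a-1) x_a x_(a+1), which
   are monomials of degree 3k.  Encoding a monomial by the list of its
   variable indices read modulo n, a product of k generators is a list of k
   blocks of three consecutive integers.  For k = n - 1 + d we take
     f = (x_0 ... x_(n-1))^2 * x_4 ... x_(n-1) * (x_0 x_1 x_2)^d,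
   of degree 3k - 1, and check (this is where n mod 3 <> 0 is used) that for
   every index a the list of x_a f splits into k such blocks.  Hence m is
   associated to R/I_n^k and depth(R/I_n^k) = 0 for all k >= n - 1. *)

Section IdealsOfMonomials.
Variables (K : fieldType) (n : nat).
Local Notation R := {mpoly K[n]}.
Local Open Scope ring_scope.
Implicit Types (J : seq R) (p q g : R).

Lemma in_ideal0 J : in_ideal J 0.
Proof. by exists (fun _ => 0); rewrite big1 // => i _; rewrite mul0r. Qed.

Lemma in_idealD J p q : in_ideal J p -> in_ideal J q -> in_ideal J (p + q).
Proof.
move=> [c1 ->] [c2 ->]; exists (fun i => c1 i + c2 i).
by rewrite -big_split; apply: eq_bigr => i _; rewrite mulrDl.
Qed.

Lemma in_idealMl J c p : in_ideal J p -> in_ideal J (c * p).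
Proof.
move=> [d ->]; exists (fun i => c * d i).
by rewrite mulr_sumr; apply: eq_bigr => i _; rewrite mulrA.
Qed.

Lemma in_ideal_sum J (I : Type) (r : seq I) (P : pred I) (F : I -> R) :
  (forall i, P i -> in_ideal J (F i)) -> in_ideal J (\sum_(i <- r | P i) F i).
Proof. by move=> FJ; apply: big_ind => //; [apply: in_ideal0 | apply: in_idealD]. Qed.

Lemma in_ideal_gen J p i : (i < size J)%N -> in_ideal J (p * nth 0 J i).
Proof.
move=> iJ; exists (fun j : 'I_(size J) => if val j == i then p else 0).
rewrite (bigD1 (Ordinal iJ)) //= eqxx big1 ?addr0 // => j.
by rewrite -val_eqE /= => /negbTE ->; rewrite mul0r.
Qed.

Lemma mem_in_ideal J q : q \in J -> in_ideal J q.
Proof.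
by move=> qJ; rewrite -(nth_index 0 qJ) -[nth _ _ _]mul1r; apply: in_ideal_gen; rewrite index_mem.
Qed.

Definition monomial_gens J (D : nat) : Prop :=
  forall q, q \in J -> exists2 M : 'X_{1..n}, q = 'X_[M] :> R & (D <= mdeg M)%N.

Lemma mcoeffMX_low (c : R) (M m : 'X_{1..n}) : (mdeg m < mdeg M)%N -> (c * 'X_[M])@_m = 0.
Proof.
move=> degmM; rewrite mcoeffMr big1 // => k /eqP mE.
rewrite mcoeffX; case: eqP => [eM|_]; last by rewrite mulr0.
by exfalso; move: degmM; rewrite mE mdegD -eM; lia.
Qed.

Lemma monomial_ideal_coef J D p (m : 'X_{1..n}) :
  monomial_gens J D -> in_ideal J p -> (mdeg m < D)%N -> p@_m = 0.
Proof.
move=> monJ [c ->] degm.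
rewrite (big_morph (mcoeff m) (@mcoeffD _ _ m) (@mcoeff0 _ _ m)) big1 // => i _.
have [M -> degM] := monJ _ (mem_nth 0 (ltn_ord i)).
by apply: mcoeffMX_low; apply: leq_trans degM.
Qed.

Lemma size_max_ideal : size (max_ideal K n) = n.
Proof. by rewrite size_map size_enum_ord. Qed.

Lemma nth_max_ideal (i : 'I_n) : nth 0 (max_ideal K n) i = 'X_i.
Proof. by rewrite (nth_map i) ?size_enum_ord // nth_ord_enum. Qed.

Lemma max_ideal_monomial : monomial_gens (max_ideal K n) 1.
Proof. by move=> q /mapP[i _ ->]; exists U_(i)%MM; rewrite ?mdeg1. Qed.

(* 1 has a constant term, so m is proper. *)
Lemma max_ideal_proper : ~ in_ideal (max_ideal K n) 1.
Proof.
move=> /(monomial_ideal_coef (m := 0%MM) max_ideal_monomial).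
by rewrite mdeg0 mcoeff1 eqxx => /(_ isT) /eqP; rewrite oner_eq0.
Qed.

Lemma max_idealX (i : 'I_n) p : in_ideal (max_ideal K n) (p * 'X_i).
Proof. by rewrite -nth_max_ideal; apply: in_ideal_gen; rewrite size_max_ideal. Qed.

Lemma max_ideal_coef0 g : g@_0 = 0 -> in_ideal (max_ideal K n) g.
Proof.
move=> g0; rewrite (mpolyE g); apply: in_ideal_sum => m _.
case: (pickP (fun i : 'I_n => m i != 0%N)) => [i mi | m0].
  have -> : 'X_[m] = 'X_[m - U_(i)] * 'X_i :> R by rewrite -mpolyXD submK // lep1mP.
  by rewrite scalerAl; apply: max_idealX.
have -> : m = 0%MM by apply/mnmP => i; rewrite mnm0E; apply/eqP/negbFE/m0.
by rewrite g0 scale0r; apply: in_ideal0.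
Qed.

(* If m is an associated prime of R/J, then depth(R/J) = 0: a witness f
   with ann(f + J) = m is killed by the first element of any regular
   sequence in m, and f is not in J since 1 is not in m. *)
Lemma depth0_of_max_in_Ass J : max_in_Ass J -> has_depth J 0.
Proof.
move=> [f annf].
have fNJ : ~ in_ideal J f by rewrite -[f]mul1r annf; apply: max_ideal_proper.
split.
  exists [::]; split=> //; split=> //; split=> //; rewrite cats0 => J1.
  by apply: fNJ; rewrite -[f]mulr1; apply: in_idealMl.
case=> [//|s0 s] [inm [reg _]]; exfalso; apply: fNJ.
have := reg 0%N isT f; rewrite take0 cats0; apply.
by rewrite annf; apply: inm.
Qed.

Lemma max_in_Ass_of_socle J D (m : 'X_{1..n}) :
  monomial_gens J D -> (mdeg m < D)%N ->
  (forall i : 'I_n, in_ideal J ('X_i * 'X_[m])) -> max_in_Ass J.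
Proof.
move=> monJ degm socle; exists 'X_[m] => g; split.
  move=> /(monomial_ideal_coef (m := m) monJ) /(_ degm).
  by rewrite -[m in _@_m]addm0 mcoeffMX; apply: max_ideal_coef0.
move=> [c ->]; rewrite mulr_suml; apply: in_ideal_sum => i _.
have ilt : (i < n)%N by rewrite -[n in (_ < n)%N]size_max_ideal.
by rewrite -[nat_of_ord i]/(nat_of_ord (Ordinal ilt)) nth_max_ideal -mulrA; apply: in_idealMl.
Qed.

Lemma ideal_pow_prod J k (F : {ffun 'I_k -> 'I_(size J)}) :
  in_ideal (ideal_pow J k) (\prod_(j < k) nth 0 J (F j)).
Proof. by apply: mem_in_ideal; apply: map_f; rewrite mem_enum. Qed.

Lemma ideal_pow_monomial J D k :
  monomial_gens J D -> monomial_gens (ideal_pow J k) (D * k).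
Proof.
move=> monJ _ /mapP[F _ ->].
pose M j := mlead (nth 0 J (F j)).
have monF j : nth 0 J (F j) = 'X_[M j] /\ (D <= mdeg (M j))%N.
  by rewrite /M; have [M' -> degM] := monJ _ (mem_nth 0 (ltn_ord (F j))); rewrite mleadXm.
exists (\sum_(j < k) M j)%MM.
  rewrite (big_morph (fun M => 'X_[M] : R) (@mpolyXD _ _) (@mpolyX0 _ _)).
  by apply: eq_bigr => j _; case: (monF j).
rewrite mdeg_sum -[k in (D * k)%N]card_ord mulnC -sum_nat_const.
by apply: leq_sum => j _; case: (monF j).
Qed.

End IdealsOfMonomials.

Section CycleWords.
Variable n : nat.
Hypothesis n_gt0 : 0 < n.

(* A monomial of R is encoded by the list of its variable indices, read
   modulo n; residue_count s p is the exponent of x_p. *)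
Definition residue_count (s : seq nat) (p : nat) : nat :=
  count (fun t => t %% n == p) s.
Local Notation cnt := residue_count.

Lemma cnt_cat s1 s2 p : cnt (s1 ++ s2) p = cnt s1 p + cnt s2 p.
Proof. exact: count_cat. Qed.

Lemma cnt_shift r m p : cnt (iota (n + r) m) p = cnt (iota r m) p.
Proof. by rewrite /cnt iotaDl count_map; apply: eq_count => t /=; rewrite modnDl. Qed.

(* Any n consecutive integers meet each residue class exactly once: sliding
   the window by one trades r for n + r, which has the same residue. *)
Lemma cnt_window r p : p < n -> cnt (iota r n) p = 1.
Proof.
move=> pn; elim: r => [|r IHr].
  rewrite /cnt (eq_in_count (a2 := pred1 p)).
    by rewrite count_uniq_mem ?iota_uniq // mem_iota add0n pn.
  by move=> t; rewrite mem_iota => /andP[_ tn] /=; rewrite modn_small.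
have headE : iota r n = r :: iota r.+1 n.-1 by rewrite -(prednK n_gt0).
have lastE : iota r.+1 n = iota r.+1 n.-1 ++ [:: n + r].
  by rewrite -{1}(prednK n_gt0) -[n.-1.+1]addn1 iotaD; congr (_ ++ [:: _]); lia.
move: IHr; rewrite headE lastE cnt_cat /cnt /= (modnDl r n) addn0; lia.
Qed.

Lemma cnt_iota_wrap r m p : p < n -> cnt (iota r (n + m)) p = 1 + cnt (iota r m) p.
Proof. by move=> pn; rewrite iotaD cnt_cat cnt_window // (addnC r) cnt_shift. Qed.

Lemma residues_distinct a k l : k < l < n -> (a + k) %% n != (a + l) %% n.
Proof.
case/andP=> kl ln; rewrite eqn_modDl !modn_small ?(ltn_eqF kl) //.
exact: ltn_trans ln.
Qed.

(* The list of the generator x_a x_(a+1) x_(a+2) of NI(C_n) (indices mod n),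
   and of a product of such generators. *)
Definition triple (a : nat) : seq nat := [:: a; a.+1; a.+2].
Definition triples (L : seq nat) : seq nat := flatten (map triple L).

Lemma triples_cat L1 L2 : triples (L1 ++ L2) = triples L1 ++ triples L2.
Proof. by rewrite /triples map_cat flatten_cat. Qed.

Fixpoint chain (r j : nat) : seq nat :=
  if j is j'.+1 then r :: chain (r + 3) j' else [::].

Lemma size_chain r j : size (chain r j) = j.
Proof. by elim: j r => [|j IHj] r //=; rewrite IHj. Qed.

Lemma triples_chain r j : triples (chain r j) = iota r (3 * j).
Proof.
elim: j r => [|j IHj] r; first by rewrite muln0.
by rewrite mulnS iotaD -IHj.
Qed.

Definition mon (s : seq nat) : 'X_{1..n} := [multinom cnt s i | i < n].

Lemma mon_eq s1 s2 : (forall p, p < n -> cnt s1 p = cnt s2 p) -> mon s1 = mon s2.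
Proof. by move=> cnt12; apply/mnmP=> i; rewrite !mnmE cnt12. Qed.

Lemma mon_cat s1 s2 : mon (s1 ++ s2) = (mon s1 + mon s2)%MM.
Proof. by apply/mnmP=> i; rewrite mnmDE !mnmE cnt_cat. Qed.

Lemma mon_cons (i : 'I_n) s : (U_(i) + mon s)%MM = mon (val i :: s).
Proof. by apply/mnmP=> j; rewrite mnmDE !mnmE /residue_count /= modn_small. Qed.

Lemma mon_triples L : mon (triples L) = (\sum_(a <- L) mon (triple a))%MM.
Proof.
elim: L => [|a L IHL]; last by rewrite big_cons -IHL -mon_cat.
by rewrite big_nil; apply/mnmP=> i; rewrite !mnmE.
Qed.

Lemma mdeg_mon s : mdeg (mon s) = size s.
Proof.
rewrite mdegE; elim: s => [|t s IHs]; first by rewrite big1 // => i; rewrite mnmE.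
rewrite (eq_bigr (fun i : 'I_n => (t %% n == i) + mon s i)); last first.
  by move=> i _; rewrite !mnmE.
rewrite big_split /= IHs (bigD1 (Ordinal (ltn_pmod t n_gt0))) //= eqxx big1 //.
by move=> i; rewrite eq_sym -val_eqE /= => /negbTE ->.
Qed.

Definition socle_word (d : nat) : seq nat :=
  iota 0 n ++ iota 0 n ++ iota 4 (n - 4) ++ iota 0 (3 * d).

Lemma size_socle_word d : 4 <= n -> size (socle_word d) < 3 * (n.-1 + d).
Proof. by move=> n4; rewrite !size_cat !size_iota; lia. Qed.

(* The two splittings of 3n - 3 = (n - 4) + (2n + 1) = (2n - 4) + (n + 1)
   into multiples of 3, according to n mod 3. *)
Lemma block_lengths : 4 <= n -> n %% 3 != 0 -> exists j1 j2,
  (3 * j1 = n - 4 /\ 3 * j2 = n + (n + 1)) \/ (3 * j1 = n + (n - 4) /\ 3 * j2 = n + 1).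
Proof.
move=> n4; have := divn_eq n 3; have := ltn_pmod n (isT : 0 < 3).
case: (n %% 3) => [|[|[|r]]] // _ nE _.
- by exists (n %/ 3).-1, (n %/ 3).*2.+1; left; lia.
- by exists (n %/ 3).*2, (n %/ 3).+1; right; lia.
Qed.

(* For every index a, the list a :: socle_word d splits into n - 1 + d
   triples of consecutive integers: the chains starting at 4 and at a cover
   x_4 ... x_(n-1), one full round and a, grouped according to n mod 3. *)
Lemma socle_cover d a : 4 <= n -> n %% 3 != 0 -> exists2 L,
  size L = n.-1 + d & mon (a :: socle_word d) = mon (triples L).
Proof.
move=> n4 n3; have [j1 [j2 blocks]] := block_lengths n4 n3.
exists (chain 4 j1 ++ chain a j2 ++ chain 0 d).
  by rewrite !size_cat !size_chain; lia.
apply: mon_eq => p pn.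
rewrite !triples_cat !triples_chain /socle_word !cnt_cat.
rewrite -cat1s -[[:: a]]/(iota a 1) !cnt_cat !cnt_window //.
case: blocks => [[-> ->] | [-> ->]]; rewrite !cnt_iota_wrap //; lia.
Qed.

End CycleWords.

Lemma indicator3 (x y z p : nat) : x != y -> x != z -> y != z ->
  (((x == p) || (y == p) || (z == p)) : nat) = (x == p) + (y == p) + (z == p).
Proof.
move=> xy xz yz; have [<-|_] := eqVneq x p.
  by rewrite eq_sym (negbTE xy) eq_sym (negbTE xz).
have [<-|_] := eqVneq y p; first by rewrite eq_sym (negbTE yz).
by case: (z == p).
Qed.

Section CyclePowers.
Variables (K : fieldType) (n : nat).
Hypothesis n_gt2 : 2 < n.
Local Notation R := {mpoly K[n]}.
Local Notation cnt := (residue_count n).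
Local Notation gens := (NI_cycle K n).
Local Notation mon := (mon n).

Let n_gt0 : 0 < n. Proof. exact: ltnW (ltnW n_gt2). Qed.

(* The closed neighbourhood of the vertex a + 1 in C_n is {a, a+1, a+2}
   (mod n), counted without repetition since n > 2. *)
Lemma cycle_nbhd_count a (p : 'I_n) :
  let i := Ordinal (ltn_pmod a.+1 n_gt0) in
  (cycle_adj i p || (p == i) : nat) = cnt (triple a) p.
Proof.
rewrite /cycle_adj -val_eqE /=.
have next : (val p == (a.+1 %% n).+1 %% n) = (a.+2 %% n == p).
  by rewrite -[(a.+1 %% n).+1]addn1 modnDml addn1 eq_sym.
have prev : (a.+1 %% n == p.+1 %% n) = (a %% n == p).
  by rewrite -[a.+1]addn1 -[p.+1]addn1 eqn_modDr (modn_small (ltn_ord p)).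
have distinct k l : k < l < 3 -> (a + k) %% n != (a + l) %% n.
  by case/andP=> kl l3; apply: residues_distinct; rewrite kl (leq_trans l3 n_gt2).
rewrite next prev (eq_sym (val p)) -orbA orbC indicator3 ?addn0 ?addnA //.
- by have := distinct 0 1 isT; rewrite addn0 addn1.
- by have := distinct 0 2 isT; rewrite addn0 addn2.
- by have := distinct 1 2 isT; rewrite addn1 addn2.
Qed.

Lemma size_NI_cycle : size gens = n.
Proof. by rewrite size_map size_enum_ord. Qed.

Lemma NI_cycle_triple a : nth 0%R gens (a.+1 %% n) = 'X_[mon (triple a)].
Proof.
rewrite -[a.+1 %% n]/(nat_of_ord (Ordinal (ltn_pmod a.+1 n_gt0))).
rewrite (nth_map (Ordinal (ltn_pmod a.+1 n_gt0))) ?size_enum_ord // nth_ord_enum.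
rewrite -(big_morph (fun m => 'X_[m] : R) (@mpolyXD _ _) (@mpolyX0 _ _)).
congr 'X_[_]; apply/mnmP=> p; rewrite mnm_sumE mnmE -cycle_nbhd_count.
rewrite big_mkcond (bigD1 p) //= big1 => [|j jp].
  by rewrite mnm1E eqxx; case: ifP.
by rewrite mnm1E (negbTE jp); case: ifP.
Qed.

Lemma NI_cycle_monomial : monomial_gens gens 3.
Proof.
move=> q /(nthP 0%R)[i]; rewrite size_NI_cycle => ilt <-.
have -> : i = (i + n.-1).+1 %% n by rewrite -addnS prednK // modnDr modn_small.
by rewrite NI_cycle_triple; exists (mon (triple (i + n.-1))); rewrite ?(mdeg_mon n_gt0).
Qed.

Lemma triples_in_pow L : in_ideal (ideal_pow gens (size L)) 'X_[mon (triples L)].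
Proof.
have lt_gens t : t.+1 %% n < size gens by rewrite size_NI_cycle ltn_pmod.
pose F := [ffun j : 'I_(size L) => Ordinal (lt_gens (nth 0 L j))].
have -> : 'X_[mon (triples L)] = (\prod_(j < size L) nth 0 gens (F j))%R.
  under eq_bigr do rewrite ffunE /= NI_cycle_triple.
  by rewrite -(big_morph (fun m => 'X_[m] : R) (@mpolyXD _ _) (@mpolyX0 _ _))
             mon_triples (big_nth 0) big_mkord.
exact: ideal_pow_prod.
Qed.

Lemma NI_cycle_pow_max_in_Ass d : 4 <= n -> n %% 3 != 0 ->
  max_in_Ass (ideal_pow gens (n.-1 + d)).
Proof.
move=> n4 n3.
apply: (max_in_Ass_of_socle (D := 3 * (n.-1 + d)) (m := mon (socle_word n d))).
- exact: ideal_pow_monomial NI_cycle_monomial.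
- by rewrite (mdeg_mon n_gt0) size_socle_word.
- move=> i; have [L sizeL coverL] := socle_cover n_gt0 d i n4 n3.
  by rewrite -mpolyXD mon_cons coverL -sizeL; apply: triples_in_pow.
Qed.

End CyclePowers.

Local Open Scope ring_scope.

Theorem corollary3p7 (K : fieldType) (n : nat) :
  (4 <= n)%N -> (n %% 3 != 0)%N ->
  has_depth (ideal_pow (NI_cycle K n) n.-1) 0 /\
  max_in_Ass (ideal_pow (NI_cycle K n) n.-1) /\
  (exists k0 : nat, forall k : nat, (k0 <= k)%N ->
      has_depth (ideal_pow (NI_cycle K n) k) 0).
Proof.
move=> n4 n3.
have max_ass d : max_in_Ass (ideal_pow (NI_cycle K n) (n.-1 + d)).
  exact: NI_cycle_pow_max_in_Ass (leq_trans (isT : (2 < 4)%N) n4) d n4 n3.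
have max_ass0 := max_ass 0%N; rewrite addn0 in max_ass0.
split; [exact: depth0_of_max_in_Ass | split=> //].
exists n.-1 => k k_ge; rewrite -(subnKC k_ge).
exact: depth0_of_max_in_Ass.
Qed.
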